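(* Let $n\in\mathbb N$, $q\in\mathbb N_0$ and $\beta_1,\dots,\beta_q\in\mathbb R$. Then there exists $N\in\mathbb N$ such that \[\max_{m\in\{1,\dots,N\}}\Big\|a\,(\sin(m\alpha_1),\dots,\sin(m\alpha_n))+\sum_{k=1}^q\sin(m\beta_k)B_k+mS\Big\|\ge\|S\|\] for all $a\in\mathbb C^n$ (a column vector), $\alpha_1,\dots,\alpha_n\in\mathbb R$, $B_1,\dots,B_q\in\mathbb C^{n\times n}$ and $S\in\mathrm{Skew}(n,\mathbb C)$.
   Context: $\|\cdot\|$ is the Frobenius norm on $\mathbb C^{n\times n}$; $a\,(\sin(m\alpha_1),\dots,\sin(m\alpha_n))$ is the $n\times n$ matrix obtained as the product of the column vector $a$ with the given row vector; $\mathrm{Skew}(n,\mathbb C)$ is the set of complex $n\times n$ matrices $S$ with $S^T=-S$. For $q=0$ the sum is empty. *)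

From HB Require Import structures.
From mathcomp Require Import all_boot all_order all_algebra.
From mathcomp Require Import reals trigo.
From mathcomp Require Import complex.
Set Implicit Arguments. Unset Strict Implicit. Unset Printing Implicit Defensive.
Import Order.TTheory GRing.Theory Num.Theory.
Local Open Scope ring_scope.

Definition frob (R : realType) (n : nat) (A : 'M[R[i]]_n) : R :=
  Num.sqrt (\sum_(i < n) \sum_(j < n)
              ((complex.Re (A i j)) ^+ 2 + (complex.Im (A i j)) ^+ 2)).

Definition sinrow (R : realType) (n : nat) (m : nat) (alpha : 'I_n -> R)
  : 'rV[R[i]]_n :=
  \row_(j < n) ((sin (m%:R * alpha j))%:C)%C.

From HB Require Import structures.
From mathcomp Require Import all_boot all_order all_algebra.
From mathcomp Require Import reals trigo.
From mathcomp Require Import complex.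
From mathcomp Require Import ring lra.
Set Implicit Arguments. Unset Strict Implicit. Unset Printing Implicit Defensive.
Import Order.TTheory GRing.Theory Num.Theory.
Local Open Scope ring_scope.

(* Choose real weights c_m with sum_m c_m sin (m beta_k) = 0 for every k: the
   coefficients of X^t * prod_k (X^2 - 2 cos beta_k X + 1), which vanishes at each
   e^(i beta_k).  Then sum_m c_m M_m = a v^T + K S with v real and K = sum_m m c_m, and
   since the shift by X^t adds t times the (positive) value at 1 to K while leaving
   C = sum_m |c_m| unchanged, we may assume K >= 2 C.  For T skew and A, v real,
   |T|^2 <= 2 |A v^T + T|^2, because
   sum_ijk (A_i T_jk + A_j T_ki + A_k T_ij)^2 = 3 (|A|^2 |T|^2 - 2 |A^T T|^2).
   Applying this to the real and imaginary parts and using Cauchy-Schwarz gives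
   K^2 |S|^2 <= 2 C^2 max_m |M_m|^2, hence |S| <= max_m |M_m|. *)

Section SquareNorms.
Variables (R : realFieldType) (I J : finType).

Definition sqnorm (T : I -> I -> R) := \sum_i \sum_j T i j ^+ 2.

Lemma sqnorm_ge0 T : 0 <= sqnorm T.
Proof. by apply: sumr_ge0 => i _; apply: sumr_ge0 => j _; apply: sqr_ge0. Qed.

Lemma sqnormMl (k : R) T : sqnorm (fun i j => k * T i j) = k ^+ 2 * sqnorm T.
Proof.
rewrite mulr_sumr; apply: eq_bigr => i _; rewrite mulr_sumr.
by apply: eq_bigr => j _; rewrite exprMn.
Qed.

Lemma sum2D (F G : I -> I -> R) :
  \sum_i \sum_j (F i j + G i j) = \sum_i \sum_j F i j + \sum_i \sum_j G i j.
Proof. by rewrite -big_split; apply: eq_bigr => i _; rewrite -big_split. Qed.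

Lemma sum3D (F G : I -> I -> I -> R) :
  \sum_i \sum_j \sum_k (F i j k + G i j k) =
  \sum_i \sum_j \sum_k F i j k + \sum_i \sum_j \sum_k G i j k.
Proof.
by rewrite -sum2D; apply: eq_bigr => i _; apply: eq_bigr => j _; rewrite -big_split.
Qed.

Lemma sum3Ml (a : R) (F : I -> I -> I -> R) :
  \sum_i \sum_j \sum_k a * F i j k = a * \sum_i \sum_j \sum_k F i j k.
Proof.
rewrite mulr_sumr; apply: eq_bigr => i _; rewrite mulr_sumr.
by apply: eq_bigr => j _; rewrite mulr_sumr.
Qed.

Lemma sum3_rotate (F : I -> I -> I -> R) :
  \sum_i \sum_j \sum_k F j k i = \sum_i \sum_j \sum_k F i j k.
Proof. by rewrite exchange_big; apply: eq_bigr => j _; rewrite exchange_big. Qed.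

Lemma cyclic_sum_sqr (F : I -> I -> I -> R) :
  \sum_i \sum_j \sum_k (F i j k + F j k i + F k i j) ^+ 2 =
  3 * \sum_i \sum_j \sum_k F i j k ^+ 2
  + 6 * \sum_i \sum_j \sum_k F i j k * F j k i.
Proof.
pose G i j k := F i j k * F j k i.
transitivity (\sum_i \sum_j \sum_k
  (F i j k ^+ 2 + F j k i ^+ 2 + F k i j ^+ 2 + 2 * G i j k + 2 * G j k i + 2 * G k i j)).
  by do 3!(apply: eq_bigr => ? _); rewrite /G; ring.
have rot2 (H : I -> I -> I -> R) :
    \sum_i \sum_j \sum_k H k i j = \sum_i \sum_j \sum_k H i j k.
  by rewrite -(sum3_rotate (fun i j k => H k i j)).
rewrite !sum3D !sum3Ml (sum3_rotate (fun i j k => F i j k ^+ 2)) (sum3_rotate G).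
rewrite (rot2 (fun i j k => F i j k ^+ 2)) (rot2 G) /G; ring.
Qed.

Section Skew.
Variables (A : I -> R) (T : I -> I -> R).
Hypothesis skewT : forall i j, T j i = - T i j.

Lemma skew_sum_sqr_le :
  2 * \sum_k (\sum_i A i * T i k) ^+ 2 <= (\sum_i A i ^+ 2) * sqnorm T.
Proof.
set w := fun k => \sum_i A i * T i k.
have squares : \sum_i \sum_j \sum_k (A i * T j k) ^+ 2 = (\sum_i A i ^+ 2) * sqnorm T.
  rewrite mulr_suml; apply: eq_bigr => i _; rewrite mulr_sumr.
  by apply: eq_bigr => j _; rewrite mulr_sumr; apply: eq_bigr => k _; rewrite exprMn.
have cross : \sum_i \sum_j \sum_k (A i * T j k) * (A j * T k i) = - \sum_k w k ^+ 2.
  rewrite -sum3_rotate -sumrN; apply: eq_bigr => k _.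
  have wN : \sum_i A i * T k i = - w k.
    by rewrite -sumrN; apply: eq_bigr => i _; rewrite skewT mulrN.
  rewrite -[RHS]mulNr -{1}wN mulr_suml; apply: eq_bigr => i _; rewrite mulr_sumr.
  by apply: eq_bigr => j _; ring.
have := cyclic_sum_sqr (fun i j k => A i * T j k).
rewrite squares cross => E.
have : 0 <= \sum_i \sum_j \sum_k (A i * T j k + A j * T k i + A k * T i j) ^+ 2.
  by do 3!(apply: sumr_ge0 => ? _); apply: sqr_ge0.
rewrite E; lra.
Qed.

Lemma skew_sqnorm_le (v : I -> R) :
  sqnorm T <= 2 * sqnorm (fun i j => A i * v j + T i j).
Proof.
set a := \sum_i A i ^+ 2; set X := \sum_j v j ^+ 2.
set w := fun k => \sum_i A i * T i k; set Y := \sum_j v j * w j.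
have expand : sqnorm (fun i j => A i * v j + T i j) = a * X + 2 * Y + sqnorm T.
  transitivity (\sum_i \sum_j (A i ^+ 2 * v j ^+ 2 + 2 * (v j * (A i * T i j)) + T i j ^+ 2)).
    by apply: eq_bigr => i _; apply: eq_bigr => j _; ring.
  rewrite !sum2D /a /X big_distrlr; congr (_ + _ + _).
  rewrite exchange_big /Y mulr_sumr; apply: eq_bigr => j _ /=.
  by rewrite /w !mulr_sumr; apply: eq_bigr => i _.
have a_ge0 : 0 <= a by apply: sumr_ge0 => i _; apply: sqr_ge0.
have Z_le := skew_sum_sqr_le; rewrite -/a -/w in Z_le.
have T_ge0 := sqnorm_ge0 T.
rewrite expand; have [a0 | a_neq0] := eqVneq a 0.
  have A0 i : A i = 0.
    by apply/eqP; rewrite -sqrf_eq0; apply/eqP/(psumr_eq0P (fun i _ => sqr_ge0 (A i)) a0).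
  have -> : Y = 0 by apply: big1 => j _; rewrite /w big1 ?mulr0 // => i _; rewrite A0 mul0r.
  rewrite a0; lra.
have a_gt0 : 0 < a by rewrite lt_def a_neq0.
have : 0 <= \sum_j (a * v j + w j) ^+ 2 by apply: sumr_ge0 => j _; apply: sqr_ge0.
have -> : \sum_j (a * v j + w j) ^+ 2 = a ^+ 2 * X + 2 * a * Y + \sum_k w k ^+ 2.
  transitivity (\sum_j (a ^+ 2 * v j ^+ 2 + 2 * a * (v j * w j) + w j ^+ 2)).
    by apply: eq_bigr => j _; ring.
  by rewrite !big_split /= -!mulr_sumr.
(* a (2 a X + 4 Y + |T|^2) = 2 |a v + w|^2 + (a |T|^2 - 2 |w|^2) *)
move=> sum_ge0; rewrite -(ler_pM2l a_gt0); nra.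
Qed.

End Skew.

Lemma sqr_wsum_le (w y : J -> R) : (forall m, 0 <= w m) ->
  (\sum_m w m * y m) ^+ 2 <= (\sum_m w m) * \sum_m w m * y m ^+ 2.
Proof.
move=> w_ge0; set W := \sum_m w m; set U := \sum_m w m * y m.
set V := \sum_m w m * y m ^+ 2.
have : 0 <= \sum_m \sum_l w m * w l * (y m - y l) ^+ 2.
  by do 2!(apply: sumr_ge0 => ? _); rewrite mulr_ge0 ?sqr_ge0 ?mulr_ge0.
have -> : \sum_m \sum_l w m * w l * (y m - y l) ^+ 2 = V * W + W * V - 2 * (U * U).
  rewrite /U /V /W !big_distrlr mulr_sumr -big_split -sumrB /=.
  apply: eq_bigr => m _; rewrite mulr_sumr -big_split -sumrB.
  by apply: eq_bigr => l _ /=; ring.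
lra.
Qed.

Lemma sqr_sum_le (c x : J -> R) :
  (\sum_m c m * x m) ^+ 2 <= (\sum_m `|c m|) * \sum_m `|c m| * x m ^+ 2.
Proof.
have norm_le : `|\sum_m c m * x m| <= \sum_m `|c m| * `|x m|.
  by apply: le_trans (ler_norm_sum _ _ _) _; under eq_bigr do rewrite normrM.
rewrite -real_normK ?num_real //; apply: le_trans (lerXn2r _ _ _ norm_le) _.
- by rewrite nnegrE.
- by rewrite nnegrE; apply: le_trans norm_le.
under [X in _ <= _ * X]eq_bigr do rewrite -real_normK ?num_real //.
exact: sqr_wsum_le.
Qed.

Lemma sqnorm_sum_le (c : J -> R) (X : J -> I -> I -> R) :
  sqnorm (fun i j => \sum_m c m * X m i j) <=
  (\sum_m `|c m|) * \sum_m `|c m| * sqnorm (X m).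
Proof.
have entrywise : sqnorm (fun i j => \sum_m c m * X m i j) <=
    \sum_i \sum_j (\sum_m `|c m|) * \sum_m `|c m| * X m i j ^+ 2.
  by apply: ler_sum => i _; apply: ler_sum => j _; apply: sqr_sum_le.
apply: le_trans entrywise _.
have -> : \sum_m `|c m| * sqnorm (X m) = \sum_i \sum_j \sum_m `|c m| * X m i j ^+ 2.
  under [RHS]eq_bigr do rewrite exchange_big; rewrite [RHS]exchange_big.
  by apply: eq_bigr => m _; rewrite mulr_sumr; apply: eq_bigr => i _; rewrite mulr_sumr.
by under eq_bigr do rewrite -mulr_sumr; rewrite -mulr_sumr.
Qed.

Lemma skew_sqnorm_le_comb (c : J -> R) (X : J -> I -> I -> R) A v T :
  (forall i j, T j i = - T i j) ->
  (forall i j, \sum_m c m * X m i j = A i * v j + T i j) ->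
  sqnorm T <= 2 * ((\sum_m `|c m|) * \sum_m `|c m| * sqnorm (X m)).
Proof.
move=> skewT comb; apply: le_trans (skew_sqnorm_le A skewT v) _.
rewrite ler_pM2l // /sqnorm.
under eq_bigr => i _ do under eq_bigr => j _ do rewrite -comb.
exact: sqnorm_sum_le.
Qed.

End SquareNorms.

Lemma sum_coefMXn (R : nzSemiRingType) (V : nmodType) (F : nat -> R -> V) t (p : {poly R}) :
  (forall m, F m 0 = 0) ->
  \sum_(m < size (p * 'X^t)) F m (p * 'X^t)`_m = \sum_(m < size p) F (t + m)%N p`_m.
Proof.
move=> F0; have [-> | p_neq0] := eqVneq p 0; first by rewrite mul0r size_poly0 !big_ord0.
rewrite size_mulXn // big_split_ord /= big1 ?add0r => [|m _]; last first.
  by rewrite coefMXn ltn_ord F0.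
by apply: eq_bigr => m _; rewrite coefMXn ltnNge leq_addr /= addKn.
Qed.

Lemma exists_natmul_ge (R : archiFieldType) (y x : R) : 0 < x ->
  exists2 t : nat, (0 < t)%N & y <= t%:R * x.
Proof.
move=> x_gt0; set b := Num.Def.archi_bound (`|y| / x).
have b_gt : `|y| / x < b%:R by rewrite archi_boundP // divr_ge0 // ltW.
exists b.+1 => //; apply: le_trans (ler_norm _) _.
rewrite -[`|y|](mulfVK (lt0r_neq0 x_gt0)) ler_pM2r //.
by apply: ltW; rewrite -natr1 ltr_wpDr.
Qed.

Section ComplexParts.
Variable R : rcfType.
Local Open Scope complex_scope.

Lemma Re_realCM (r : R) (z : R[i]) : complex.Re (r%:C * z) = r * complex.Re z.
Proof. by case: z => a b /=; rewrite mul0r subr0. Qed.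

Lemma Im_realCM (r : R) (z : R[i]) : complex.Im (r%:C * z) = r * complex.Im z.
Proof. by case: z => a b /=; rewrite mul0r addr0. Qed.

End ComplexParts.

Section SineAnnihilators.
Variable R : realType.
Local Open Scope complex_scope.

Definition expi (x : R) : R[i] := cos x +i* sin x.

Lemma expiD x y : expi (x + y) = expi x * expi y.
Proof.
by rewrite /expi cosD sinD; apply/eqP; rewrite eq_complex /=; apply/andP; split; apply/eqP; ring.
Qed.

Lemma expiX x m : expi x ^+ m = expi (m%:R * x).
Proof.
elim: m => [|m IH]; first by rewrite expr0 mul0r /expi cos0 sin0.
by rewrite exprS IH -expiD -natr1 mulrDl mul1r addrC.
Qed.

Lemma expi_cos1 x : cos x = 1 -> expi x = 1.
Proof.
move=> cos1; rewrite /expi cos1; congr (_ +i* _).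
by apply/eqP; rewrite -sqrf_eq0 sin2cos2 cos1 expr1n subrr.
Qed.

Lemma sum_coef_sin (p : {poly R}) x :
  \sum_(m < size p) p`_m * sin (m%:R * x) =
  complex.Im ((map_poly (real_complex R) p).[expi x]).
Proof.
rewrite horner_coef size_map_poly raddf_sum; apply: eq_bigr => m _.
by rewrite coef_map expiX /expi /= mul0r addr0.
Qed.

Definition expi_poly x : {poly R} := 'X^2 - (2 * cos x) *: 'X + 1.

Lemma root_expi_poly x : root (map_poly (real_complex R) (expi_poly x)) (expi x).
Proof.
rewrite /expi_poly rmorphD rmorphB rmorph1 /= map_polyXn map_polyZ map_polyX /=.
rewrite rootE !hornerE expr2 /expi; apply/eqP/eqP; rewrite eq_complex /=.
have := cos2Dsin2 x => pythagoras; apply/andP; split; apply/eqP; nra.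
Qed.

Lemma expi_poly1 x : (expi_poly x).[1] = 2 - 2 * cos x.
Proof. by rewrite /expi_poly !hornerE expr1n addrAC. Qed.

(* The factors with cos (beta k) = 1 are left out: then sin (m * beta k) = 0 for all m,
   and dropping them keeps the value at 1 positive. *)
Definition sine_annihilator q (beta : 'I_q -> R) : {poly R} :=
  \prod_(k < q | cos (beta k) != 1) expi_poly (beta k).

Lemma sine_annihilator1_gt0 q (beta : 'I_q -> R) : 0 < (sine_annihilator beta).[1].
Proof.
rewrite horner_prod; apply: prodr_gt0 => k cos_neq1; rewrite expi_poly1.
by have := cos_le1 (beta k); rewrite le_eqVlt (negbTE cos_neq1) /=; lra.
Qed.

Lemma sum_coef_sin_annihilatorM q (beta : 'I_q -> R) (p : {poly R}) k :
  let c := sine_annihilator beta * p in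
  \sum_(m < size c) c`_m * sin (m%:R * beta k) = 0.
Proof.
move=> c; have [cos1 | cos_neq1] := eqVneq (cos (beta k)) 1.
  apply: big1 => m _.
  have -> : sin (m%:R * beta k) = complex.Im (expi (beta k) ^+ m) by rewrite expiX.
  by rewrite expi_cos1 // expr1n mulr0.
rewrite sum_coef_sin rmorphM hornerM rmorph_prod horner_prod (bigD1 k) //=.
by rewrite (rootP (root_expi_poly _)) !mul0r.
Qed.

Lemma exists_sine_annihilator q (beta : 'I_q -> R) : exists c : {poly R},
  [/\ c`_0 = 0, forall k, \sum_(m < size c) c`_m * sin (m%:R * beta k) = 0,
      0 < \sum_(m < size c) `|c`_m|
    & 2 * \sum_(m < size c) `|c`_m| <= \sum_(m < size c) c`_m * m%:R].
Proof.
set P := sine_annihilator beta; have P1_gt0 : 0 < P.[1] := sine_annihilator1_gt0 beta.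
set C := \sum_(m < size P) `|P`_m|; set K := \sum_(m < size P) P`_m * m%:R.
have P1_le : P.[1] <= C.
  by rewrite horner_coef; apply: ler_sum => m _; rewrite expr1n mulr1 ler_norm.
have [t t_gt0 t_big] := exists_natmul_ge (2 * C - K) P1_gt0.
exists (P * 'X^t); split.
- by rewrite coefMXn t_gt0.
- exact: sum_coef_sin_annihilatorM.
- rewrite (sum_coefMXn (F := fun _ x => `|x|)) ?normr0 //.
  exact: lt_le_trans P1_le.
rewrite (sum_coefMXn (F := fun _ x => `|x|)) ?normr0 // -/C.
rewrite (sum_coefMXn (F := fun m x => x * m%:R)) => [|m]; last by rewrite mul0r.
have -> : \sum_(m < size P) P`_m * (t + m)%:R = t%:R * P.[1] + K.
  rewrite horner_coef mulr_sumr -big_split; apply: eq_bigr => m _ /=.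
  by rewrite natrD expr1n; ring.
lra.
Qed.

End SineAnnihilators.

Section FrobeniusBound.
Variables (R : realType) (n : nat).
Local Open Scope complex_scope.

Lemma frob_sqr (X : 'M[R[i]]_n) : frob X ^+ 2 =
  sqnorm (fun i j => complex.Re (X i j)) + sqnorm (fun i j => complex.Im (X i j)).
Proof. by rewrite /frob sqr_sqrtr sum2D // addr_ge0 // sqnorm_ge0. Qed.

Lemma frob_skew_le_comb (J : finType) (c : J -> R) (M : J -> 'M[R[i]]_n)
    (a : 'cV[R[i]]_n) (v : 'I_n -> R) (K : R) (S : 'M[R[i]]_n) :
  S^T = - S ->
  (forall i j, \sum_m (c m)%:C * M m i j = a i 0 * (v j)%:C + K%:C * S i j) ->
  K ^+ 2 * frob S ^+ 2 <= 2 * ((\sum_m `|c m|) * \sum_m `|c m| * frob (M m) ^+ 2).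
Proof.
move=> skewS comb.
have part (P : R[i] -> R) : {morph P : x y / x + y} ->
    (forall r z, P (r%:C * z) = r * P z) ->
    K ^+ 2 * sqnorm (fun i j => P (S i j)) <=
    2 * ((\sum_m `|c m|) * \sum_m `|c m| * sqnorm (fun i j => P (M m i j))).
  move=> PD PM; have P0 : P 0 = 0 by rewrite -(mul0r 0) -[0 * 0]/((0 : R)%:C * 0) PM mul0r.
  rewrite -sqnormMl; apply: (skew_sqnorm_le_comb (A := fun i => P (a i 0)) (v := v)).
    move=> i j; have /matrixP/(_ i j) := skewS; rewrite !mxE => ->.
    by rewrite -(mulN1r (S i j)) -(rmorphN1 (real_complex R)) PM mulN1r mulrN.
  move=> i j; under eq_bigr do rewrite -PM.
  by rewrite -(big_morph P PD P0) comb PD PM mulrC PM mulrC.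
have := part _ (raddfD _) (@Re_realCM R); have := part _ (raddfD _) (@Im_realCM R).
move=> bound_Im bound_Re; rewrite frob_sqr mulrDr.
under [X in _ * (_ * X)]eq_bigr do rewrite frob_sqr mulrDr.
by rewrite big_split /= !mulrDr; apply: lerD.
Qed.

Lemma frob_le_of_skew_comb (J : finType) (c : J -> R) (M : J -> 'M[R[i]]_n)
    (a : 'cV[R[i]]_n) (v : 'I_n -> R) (K Mx : R) (S : 'M[R[i]]_n) :
  S^T = - S ->
  (forall i j, \sum_m (c m)%:C * M m i j = a i 0 * (v j)%:C + K%:C * S i j) ->
  0 < \sum_m `|c m| -> 2 * \sum_m `|c m| <= K ->
  0 <= Mx -> (forall m, c m != 0 -> frob (M m) <= Mx) ->
  frob S <= Mx.
Proof.
move=> skewS comb C_gt0 K_ge Mx_ge0 M_le; set C := \sum_m `|c m| in C_gt0 K_ge.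
have sum_le : \sum_m `|c m| * frob (M m) ^+ 2 <= C * Mx ^+ 2.
  rewrite /C mulr_suml; apply: ler_sum => m _.
  have [-> | cm_neq0] := eqVneq (c m) 0; first by rewrite normr0 !mul0r.
  by rewrite ler_wpM2l //; apply: lerXn2r; rewrite ?nnegrE ?sqrtr_ge0 ?M_le.
have twoC_ge0 : 0 <= 2 * C by rewrite mulr_ge0 // ltW.
have C2_le : (2 * C) ^+ 2 <= K ^+ 2.
  by apply: lerXn2r; rewrite ?nnegrE // (le_trans twoC_ge0 K_ge).
have : (2 * C) ^+ 2 * frob S ^+ 2 <= C ^+ 2 * (2 * Mx ^+ 2).
  apply: le_trans (ler_wpM2r (sqr_ge0 _) C2_le) _.
  apply: le_trans (frob_skew_le_comb skewS comb) _; rewrite -/C.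
  rewrite [leRHS](_ : _ = 2 * (C * (C * Mx ^+ 2))); last by ring.
  by rewrite ler_pM2l // ler_pM2l.
rewrite exprMn -mulrA mulrCA ler_pM2l ?exprn_gt0 // => frob_sqr_le.
have frob_ge0 : 0 <= frob S := sqrtr_ge0 _.
nra.
Qed.

End FrobeniusBound.

Section SineMatrices.
Variables (R : realType) (n q : nat) (beta : 'I_q -> R).
Variables (a : 'cV[R[i]]_n) (alpha : 'I_n -> R) (B : 'I_q -> 'M[R[i]]_n) (S : 'M[R[i]]_n).
Local Open Scope complex_scope.

Definition sine_mx (m : nat) : 'M[R[i]]_n :=
  a *m sinrow m alpha + \sum_(k < q) (sin (m%:R * beta k))%:C *: B k + (m%:R : R[i]) *: S.

Lemma sine_mxE m i j : sine_mx m i j =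
  a i 0 * (sin (m%:R * alpha j))%:C + \sum_k (sin (m%:R * beta k))%:C * B k i j
  + (m%:R)%:C * S i j.
Proof.
rewrite !mxE summxE big_ord1 !mxE rmorph_nat.
by congr (_ + _ + _); apply: eq_bigr => k _; rewrite mxE.
Qed.

Lemma sum_sine_mx D (w : nat -> R) :
  (forall k, \sum_(m < D) w m * sin (m%:R * beta k) = 0) ->
  forall i j, \sum_(m < D) (w m)%:C * sine_mx m i j =
    a i 0 * (\sum_(m < D) w m * sin (m%:R * alpha j))%:C
    + (\sum_(m < D) w m * m%:R)%:C * S i j.
Proof.
move=> annihilated i j.
have middle : \sum_(m < D) (w m)%:C *
    \sum_k (sin (m%:R * beta k))%:C * B k i j = 0.
  under eq_bigr do rewrite mulr_sumr.
  rewrite exchange_big big1 // => k _.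
  under eq_bigr do rewrite mulrA -rmorphM.
  by rewrite -mulr_suml -raddf_sum annihilated mul0r.
under eq_bigr do rewrite sine_mxE !mulrDr.
rewrite !big_split /= middle addr0 !rmorph_sum mulr_sumr mulr_suml.
by congr (_ + _); apply: eq_bigr => m _; rewrite rmorphM; ring.
Qed.

End SineMatrices.

Theorem lemma3p19 (R : realType) (n q : nat) (beta : 'I_q -> R) :
  (0 < n)%N ->
  exists N : nat, (0 < N)%N /\
    forall (a : 'cV[R[i]]_n) (alpha : 'I_n -> R) (B : 'I_q -> 'M[R[i]]_n)
           (S : 'M[R[i]]_n),
      S^T = - S ->
      frob S <=
      \big[Num.max/0]_(1 <= m < N.+1)
        frob (a *m sinrow m alpha
              + \sum_(k < q) ((sin (m%:R * beta k))%:C)%C *: B k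
              + (m%:R : R[i]) *: S).
Proof.
move=> _; have [c [c0 annihilated C_gt0 K_ge]] := exists_sine_annihilator beta.
have size_gt0 : (0 < size c)%N.
  by move: C_gt0; case: (size c) => [|//]; rewrite big_ord0 ltxx.
exists (size c); split => // a alpha B S skewS.
change (frob S <=
  \big[Num.max/0]_(1 <= m < (size c).+1) frob (sine_mx beta a alpha B S m)).
set Mx := \big[Num.max/0]_(1 <= m < _) _.
have M_le m : (0 < m <= size c)%N -> frob (sine_mx beta a alpha B S m) <= Mx.
  move=> m_in; rewrite /Mx.
  rewrite (le_bigmax_seq _ _ xpredT (fun m => frob (sine_mx beta a alpha B S m))) //.
  by rewrite mem_index_iota.
apply: (frob_le_of_skew_comb (c := fun m : 'I_(size c) => c`_m) skewS
          (sum_sine_mx a alpha B S annihilated) C_gt0 K_ge).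
- by apply: le_trans (M_le 1%N _); rewrite ?sqrtr_ge0 ?size_gt0.
- move=> m cm_neq0; apply: M_le; rewrite (ltnW (ltn_ord m)) andbT lt0n.
  by apply: contraTneq cm_neq0 => /= ->; rewrite c0 eqxx.
Qed.
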